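(* Let $A=\begin{pmatrix} a & b\\ c & d\end{pmatrix}\in SL_2(\mathbb{Z})$ with $c>0$ and $d\neq 0$. (i) If $d>0$, let $S=\begin{pmatrix}0&-1\\1&0\end{pmatrix}$, so $AS=\begin{pmatrix} b&-a\\ d&-c\end{pmatrix}$; then $\epsilon_1(AS)=e^{-3\pi i/4}\epsilon_1(A)$. (ii) If $d<0$, let $S=\begin{pmatrix}0&1\\-1&0\end{pmatrix}$, so $AS=\begin{pmatrix} -b&a\\ -d&c\end{pmatrix}$; then $\epsilon_1(AS)=e^{3\pi i/4}\epsilon_1(A)$.
   Context: For integers $k>0$ and $h$ with $\gcd(h,k)=1$, the Dedekind sum is $s(h,k)=\sum_{r=1}^{k-1}\frac{r}{k}\left(\frac{hr}{k}-\left\lfloor\frac{hr}{k}\right\rfloor-\frac12\right)$. For $M=\begin{pmatrix} a&b\\ c&d\end{pmatrix}\in SL_2(\mathbb{Z})$ with $c>0$, define $\epsilon_1(M)=-i\exp\!\left(3\pi i\left(\frac{a+d}{12c}-s(d,c)\right)\right)$. In both cases the lower-left entry of $AS$ is positive, so $\epsilon_1(AS)$ is defined. *)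

From Stdlib Require Import Reals ZArith List.
From Coquelicot Require Import Coquelicot.
Open Scope R_scope.

Definition rfloor (x : R) : R := IZR (Int_part x).

Definition dedekind_sum (h k : Z) : R :=
  fold_right Rplus 0
    (map (fun r : nat =>
            let hrk := IZR h * INR r / IZR k in
            INR r / IZR k * (hrk - rfloor hrk - 1 / 2))
         (seq 1 (Z.to_nat k - 1))).

Definition expi (theta : R) : C := (cos theta, sin theta).

Definition Ci : C := (0, 1).

(* epsilon_1 of M = [[a, b], [c, d]] (meaningful when c > 0):
   -i exp(3 pi i ((a+d)/(12c) - s(d,c))) *)
Definition epsilon1 (a b c d : Z) : C :=
  Cmult (Copp Ci)
    (expi (3 * PI * ((IZR a + IZR d) / (12 * IZR c) - dedekind_sum d c))).

(* Expanding [epsilon1], both identities reduce to Dedekind reciprocity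
   s(c,d) + s(d,c) = (c^2 + d^2 + 1)/(12cd) - 1/4 together with s(-c,d) = -s(c,d);
   the determinant condition ad - bc = 1 then makes the two phases differ by
   exactly -3pi/4.  Case (ii) is case (i) applied to AS', because (AS')S = A.
   Reciprocity is proved elementarily: writing h r = k q_r + p_r, one has
   s(h,k) = (sum_r r p_r)/k^2 - (k-1)/4, and the sums of r p_r, r q_r, q_r, q_r^2,
   q_r p_r are tied together by summing the division identity against various
   weights, by the permutation r |-> h r mod k, and by counting the lattice
   points under the line y = h x / k in two ways. *)

From Stdlib Require Import Reals ZArith List Lra Lia.
From Coquelicot Require Import Coquelicot.
From mathcomp Require Import all_boot zify.

Open Scope nat_scope.

Definition sum_id n := \sum_(r < n) r.
Definition sum_sq n := \sum_(r < n) r * r.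

Definition sum_quo h k := \sum_(r < k) (h * r %/ k).
Definition sum_quo_sq h k := \sum_(r < k) (h * r %/ k) * (h * r %/ k).
Definition sum_quo_rem h k := \sum_(r < k) (h * r %/ k) * (h * r %% k).
Definition sum_id_quo h k := \sum_(r < k) r * (h * r %/ k).
Definition sum_id_rem h k := \sum_(r < k) r * (h * r %% k).

Lemma sum_id_double n : 2 * sum_id n + n = n * n.
Proof. by elim: n => [|n IH]; rewrite /sum_id ?big_ord0 // big_ord_recr /= -/(sum_id n); nia. Qed.

Lemma sum_sq_sextuple n : 6 * sum_sq n + 3 * n * n = 2 * n * n * n + n.
Proof. by elim: n => [|n IH]; rewrite /sum_sq ?big_ord0 // big_ord_recr /= -/(sum_sq n); nia. Qed.

Lemma sum_ord_pos_leq m n : \sum_(s < n) ((0 < s) && (s <= m)) = minn m n.-1.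
Proof.
elim: n => [|n IH]; first by rewrite big_ord0; lia.
by rewrite big_ord_recr /= IH; case: (ltnP 0 n); case: (leqP n m); lia.
Qed.

Lemma sum_ord_gt m n :
  m < n -> 2 * \sum_(r < n) r * (m < r) + m * m + m = 2 * sum_id n.
Proof.
elim: n => [//|n IH] lt_mn; rewrite big_ord_recr /sum_id big_ord_recr /= -/(sum_id n).
case: (ltngtP m n) => [lt_mn'|lt_nm|<-]; rewrite ?muln1 ?muln0 ?addn0; last 2 first.
- by lia.
- rewrite big1 => [|r _]; first by have := sum_id_double m; lia.
  by rewrite ltnNge ltnW ?muln0.
- by move: (IH lt_mn'); set S := (\sum_(i < n) _); lia.
Qed.

Section EuclideanDivision.
Variables h k : nat.

Lemma mul_sum_sq_divn_eq : h * sum_sq k = k * sum_id_quo h k + sum_id_rem h k.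
Proof.
rewrite /sum_sq /sum_id_quo /sum_id_rem !big_distrr -big_split /=.
apply: eq_bigr => r _; have := divn_eq (h * r) k.
by move: (h * r %/ k) (h * r %% k) => q p; nia.
Qed.

Lemma mul_sum_id_quo_divn_eq :
  h * sum_id_quo h k = k * sum_quo_sq h k + sum_quo_rem h k.
Proof.
rewrite /sum_id_quo /sum_quo_sq /sum_quo_rem !big_distrr -big_split /=.
apply: eq_bigr => r _; have := divn_eq (h * r) k.
by move: (h * r %/ k) (h * r %% k) => q p; nia.
Qed.

Hypothesis k_gt0 : 0 < k.
Hypothesis coprime_hk : coprime h k.

Lemma sum_mulmod_perm (f : nat -> nat) :
  \sum_(r < k) f (h * r %% k) = \sum_(r < k) f r.
Proof.
pose g (r : 'I_k) : 'I_k := Ordinal (ltn_pmod (h * r) k_gt0).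
have g_inj : injective g.
  move=> i j /(congr1 val) /= eq_hij; apply/val_inj => /=.
  wlog le_ij : i j eq_hij / i <= j.
    by move=> W; case: (leqP i j) => [|/ltnW] /W ->.
  have : h * j == h * i %[mod k] by rewrite eq_hij.
  rewrite eqn_mod_dvd ?leq_mul2l ?le_ij ?orbT // -mulnBr Gauss_dvdr 1?coprime_sym //.
  by case/dvdnP=> [[|c]]; have := ltn_ord j; nia.
by rewrite [RHS](reindex_inj g_inj).
Qed.

Lemma mul_sum_id_divn_eq : h * sum_id k = k * sum_quo h k + sum_id k.
Proof.
rewrite {2}/sum_id -(sum_mulmod_perm id) /sum_id /sum_quo !big_distrr -big_split /=.
apply: eq_bigr => r _; have := divn_eq (h * r) k.
by move: (h * r %/ k) (h * r %% k) => q p; nia.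
Qed.

Lemma mul2_sum_sq_divn_eq :
  h * h * sum_sq k = k * k * sum_quo_sq h k + 2 * k * sum_quo_rem h k + sum_sq k.
Proof.
rewrite {2}/sum_sq -(sum_mulmod_perm (fun x => x * x)) /sum_sq /sum_quo_sq /sum_quo_rem.
rewrite !big_distrr -!big_split /=; apply: eq_bigr => r _; have := divn_eq (h * r) k.
by move: (h * r %/ k) (h * r %% k) => q p; nia.
Qed.

End EuclideanDivision.

Lemma divn_as_count h k n :
  0 < k -> n < h * k -> n %/ k = \sum_(s < h) ((0 < s) && (k * s <= n)).
Proof.
move=> k_gt0 lt_n_hk.
have lt_quo_h : n %/ k < h by rewrite ltn_divLR.
rewrite (eq_bigr (fun s : 'I_h => nat_of_bool ((0 < s) && (s <= n %/ k)))) => [|s _].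
  by rewrite sum_ord_pos_leq; lia.
by rewrite leq_divRL // mulnC.
Qed.

Lemma coprime_leq_mul h k s r :
  coprime h k -> 0 < s < h -> (k * s <= h * r) = (k * s %/ h < r).
Proof.
move=> coprime_hk /andP [s_gt0 lt_sh].
rewrite ltn_divLR ?(leq_ltn_trans _ lt_sh) // leq_eqVlt [r * h]mulnC.
case: eqP => [eq_ks_hr | _] //=.
have : h %| s by rewrite -(Gauss_dvdr _ coprime_hk) eq_ks_hr dvdn_mulr.
by move/(dvdn_leq s_gt0); rewrite leqNgt lt_sh.
Qed.

Section LatticeCount.
Variables h k : nat.
Hypothesis h_gt0 : 0 < h.
Hypothesis k_gt0 : 0 < k.
Hypothesis coprime_hk : coprime h k.

(* Both sides count, with weight r, the lattice points (r, s) with r < k, 0 < s < h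
   and k s <= h r, by rows and by columns; coprimality rules out points on the
   line k s = h r. *)
Lemma sum_id_quo_lattice :
  2 * sum_id_quo h k + sum_quo_sq k h + sum_quo k h + 2 * sum_id k = 2 * h * sum_id k.
Proof.
have by_columns : sum_id_quo h k =
    \sum_(s < h) \sum_(r < k) r * ((0 < s) && (k * s <= h * r)).
  rewrite /sum_id_quo -exchange_big /=; apply: eq_bigr => r _.
  by rewrite (divn_as_count h _ _ k_gt0) ?big_distrr // ltn_pmul2l.
have column (s : 'I_h) :
    2 * \sum_(r < k) r * ((0 < s) && (k * s <= h * r)) + (k * s %/ h) * (k * s %/ h)
      + k * s %/ h = (0 < s) * (2 * sum_id k).
  have [-> | s_gt0] := posnP s.
    by rewrite big1 => [|r _]; rewrite ?muln0 ?div0n.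
  rewrite mul1n -(sum_ord_gt (k * s %/ h) k); last first.
    by rewrite ltn_divLR // ltn_pmul2l.
  rewrite (eq_bigr (fun r : 'I_k => r * (k * s %/ h < r))) // => r _.
  by rewrite (coprime_leq_mul _ _ _ _ coprime_hk) ?s_gt0 ?ltn_ord.
have count_pos : \sum_(s < h) ((0 < s) : nat) = h.-1.
  rewrite -(minn_idPr (leq_pred h)) -sum_ord_pos_leq; apply: eq_bigr => s _.
  by rewrite (ltnW (ltn_ord s)) andbT.
rewrite by_columns /sum_quo_sq /sum_quo big_distrr -!big_split /=.
by rewrite (eq_bigr _ (fun i _ => column i)) -big_distrl /= count_pos; nia.
Qed.

End LatticeCount.

Open Scope R_scope.

Ltac to_INR E := move/(f_equal INR): E; rewrite -?plusE -?multE ?plus_INR ?mult_INR /= => E.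

Lemma sum_id_rem_reciprocity (h k : nat) : (0 < h)%N -> (0 < k)%N -> coprime h k ->
  INR (sum_id_rem h k) / (INR k * INR k) + INR (sum_id_rem k h) / (INR h * INR h)
  = (INR h * INR h + INR k * INR k + 1) / (12 * INR h * INR k) + (INR h + INR k) / 4 - 3 / 4.
Proof.
move=> h_gt0 k_gt0 coprime_hk; have coprime_kh : coprime k h by rewrite coprime_sym.
have eU := mul_sum_sq_divn_eq h k; have eT := sum_id_quo_lattice _ _ h_gt0 k_gt0 coprime_hk.
have eU' := mul_sum_sq_divn_eq k h; have eT' := mul_sum_id_quo_divn_eq k h.
have eC' := mul2_sum_sq_divn_eq _ _ h_gt0 coprime_kh.
have eB' := mul_sum_id_divn_eq _ _ h_gt0 coprime_kh.
have eS1h := sum_id_double h; have eS1k := sum_id_double k.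
have eS2h := sum_sq_sextuple h; have eS2k := sum_sq_sextuple k.
to_INR eU; to_INR eT; to_INR eU'; to_INR eT'; to_INR eC'; to_INR eB'.
to_INR eS1h; to_INR eS1k; to_INR eS2h; to_INR eS2k.
have Hh : INR h <> 0 by apply: not_0_INR; lia.
have Hk : INR k <> 0 by apply: not_0_INR; lia.
move: (INR h) (INR k) Hh Hk (INR (sum_id_rem h k)) (INR (sum_id_rem k h)) (INR (sum_id_quo h k))
  (INR (sum_id_quo k h)) (INR (sum_quo_sq k h)) (INR (sum_quo k h)) (INR (sum_quo_rem k h))
  (INR (sum_id h)) (INR (sum_id k)) (INR (sum_sq h)) (INR (sum_sq k)) eU eT eU' eT' eC' eB' eS1h eS1k eS2h eS2k.
move=> H K Hh Hk U U' T T' A' B' C' S1h S1k S2h S2k eU eT eU' eT' eC' eB' eS1h eS1k eS2h eS2k.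
(* Solving for every other unknown, the sum A' = sum_quo_sq k h cancels. *)
have -> : U = H * S2k - K * T by lra.
have -> : U' = K * S2h - H * T' by lra.
have -> : T = H * S1k - S1k - (A' + B') / 2 by lra.
have -> : T' = (H * A' + C') / K by rewrite -eT'; field.
have -> : C' = (K * K * S2h - H * H * A' - S2h) / (2 * H) by rewrite eC'; field.
have -> : B' = (K * S1h - S1h) / H by rewrite eB'; field.
have -> : S1k = (K * K - K) / 2 by lra.
have -> : S1h = (H * H - H) / 2 by lra.
have -> : S2k = (2 * K * K * K - 3 * K * K + K) / 6 by lra.
have -> : S2h = (2 * H * H * H - 3 * H * H + H) / 6 by lra.
by field.
Qed.

Lemma frac_IZR_div (n k : Z) : (0 < k)%Z ->
  IZR n / IZR k - rfloor (IZR n / IZR k) = IZR (n mod k) / IZR k.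
Proof.
move=> k_gt0; have k_pos : 0 < IZR k by apply: IZR_lt.
have [m_ge0 m_lt_k] := Z.mod_pos_bound n k k_gt0.
have split_nk : IZR n / IZR k = IZR (n / k) + IZR (n mod k) / IZR k.
  by rewrite {1}(Z.div_mod n k) ?plus_IZR ?mult_IZR; [field; lra | lia].
have frac_bounds : 0 <= IZR (n mod k) / IZR k < 1.
  split; first by apply: Rmult_le_pos; [apply: IZR_le | apply/Rlt_le/Rinv_0_lt_compat].
  apply: (Rmult_lt_reg_r (IZR k)) => //; rewrite Rmult_1_l /Rdiv Rmult_assoc Rinv_l; last lra.
  by rewrite Rmult_1_r; apply: IZR_lt.
have [int_part_eq _] := Int_part_frac_part_spec _ _ _ frac_bounds split_nk.
by rewrite /rfloor -int_part_eq split_nk; lra.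
Qed.

Lemma dedekind_sum_mod (h k : Z) : (0 < k)%Z ->
  dedekind_sum h k = fold_right Rplus 0 (map (fun r : nat =>
    INR r / IZR k * (IZR ((h * Z.of_nat r) mod k) / IZR k - 1 / 2)) (List.seq 1 (Z.to_nat k - 1))).
Proof.
move=> k_gt0; rewrite /dedekind_sum; f_equal; apply: map_ext => r.
by rewrite INR_IZR_INZ -mult_IZR frac_IZR_div.
Qed.

Lemma fold_right_Ropp (g : nat -> R) (l : seq nat) :
  fold_right Rplus 0 (map (fun r => - g r) l) = - fold_right Rplus 0 (map g l).
Proof. by elim: l => [|r l IH] /=; rewrite ?IH; lra. Qed.

Lemma dedekind_sum_opp (h k : Z) : (0 < k)%Z -> Z.gcd k h = 1%Z ->
  dedekind_sum (- h) k = - dedekind_sum h k.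
Proof.
move=> k_gt0 gcd_kh; rewrite !dedekind_sum_mod // -fold_right_Ropp; f_equal.
apply: map_ext_in => r /in_seq r_range.
have k_neq0 : IZR k <> 0 by apply: not_0_IZR; lia.
have hr_mod_neq0 : ((h * Z.of_nat r) mod k <> 0)%Z.
  have [k_neq0' r_gt0] : k <> 0%Z /\ (0 < Z.of_nat r)%Z by lia.
  move=> /(Z.mod_divide _ _ k_neq0') /Z.gauss /(_ gcd_kh) /(Z.divide_pos_le _ _ r_gt0).
  by lia.
by rewrite Z.mul_opp_l Z.mod_opp_l_nz ?minus_IZR; [field | lia | ].
Qed.

Lemma Z_of_nat_modn (m d : nat) : (0 < d)%N ->
  Z.of_nat (m %% d) = (Z.of_nat m mod Z.of_nat d)%Z.
Proof.
move=> d_gt0; apply: (Z.mod_unique _ _ (Z.of_nat (m %/ d))).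
  by have := ltn_pmod m d_gt0; lia.
by have := divn_eq m d; lia.
Qed.

Lemma fold_right_sawtooth (K : R) (g : nat -> nat) (l : seq nat) : K <> 0 ->
  fold_right Rplus 0 (map (fun r => INR r / K * (INR (g r) / K - 1 / 2)) l)
  = INR (\sum_(r <- l) r * g r) / (K * K) - INR (\sum_(r <- l) r) / (2 * K).
Proof.
move=> K_neq0; elim: l => [|r l IH] /=; first by rewrite !big_nil /=; field.
by rewrite !big_cons IH -!plusE -!multE !plus_INR mult_INR; field.
Qed.

Lemma sum_seq1_ord (F : nat -> nat) (k : nat) : F 0%N = 0%N ->
  \sum_(r <- List.seq 1 (k - 1)) F r = \sum_(r < k) F r.
Proof.
move=> F0; rewrite -(big_mkord xpredT) /index_iota subn0.
by case: k => [|k] //=; rewrite big_cons F0 subn1.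
Qed.

Lemma dedekind_sum_nat (h k : nat) : (0 < k)%N ->
  dedekind_sum (Z.of_nat h) (Z.of_nat k)
  = INR (sum_id_rem h k) / (INR k * INR k) - (INR k - 1) / 4.
Proof.
move=> k_gt0; have k_neq0 : INR k <> 0 by apply: not_0_INR; lia.
rewrite dedekind_sum_mod ?Nat2Z.id -?INR_IZR_INZ; last lia.
rewrite (_ : map _ _ = map (fun r => INR r / INR k * (INR (h * r %% k) / INR k - 1 / 2))
                           (List.seq 1 (k - 1))); last first.
  apply: map_ext => r.
  by rewrite [INR (_ %% _)]INR_IZR_INZ Z_of_nat_modn // -multE Nat2Z.inj_mul.
rewrite fold_right_sawtooth // !sum_seq1_ord ?mul0n // -/(sum_id_rem h k) -/(sum_id k).
have gauss := sum_id_double k; to_INR gauss.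
have -> : INR (sum_id k) = (INR k * INR k - INR k) / 2 by lra.
by field.
Qed.

Lemma coprime_Zgcd (m n : nat) : Z.gcd (Z.of_nat m) (Z.of_nat n) = 1%Z -> coprime m n.
Proof.
move=> gcd_mn; apply/eqP.
have /dvdnP [u Hu] := dvdn_gcdl m n; have /dvdnP [v Hv] := dvdn_gcdr m n.
have : (Z.of_nat (gcdn m n) | 1)%Z.
  by rewrite -gcd_mn; apply: Z.gcd_greatest; [exists (Z.of_nat u) | exists (Z.of_nat v)]; lia.
by move/(Z.divide_1_r_nonneg _ (Zle_0_nat _)); lia.
Qed.

Lemma dedekind_reciprocity (h k : Z) : (0 < h)%Z -> (0 < k)%Z -> Z.gcd h k = 1%Z ->
  dedekind_sum h k + dedekind_sum k h
  = (IZR h * IZR h + IZR k * IZR k + 1) / (12 * IZR h * IZR k) - 1 / 4.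
Proof.
move=> h_gt0 k_gt0.
have [n eq_hn] : exists n, h = Z.of_nat n by exists (Z.to_nat h); lia.
have [m eq_km] : exists m, k = Z.of_nat m by exists (Z.to_nat k); lia.
subst h k => /coprime_Zgcd coprime_nm.
have [n_gt0 m_gt0] : (0 < n)%N /\ (0 < m)%N by split; lia.
have rec := sum_id_rem_reciprocity _ _ n_gt0 m_gt0 coprime_nm.
rewrite !dedekind_sum_nat // -!INR_IZR_INZ; move: rec.
by move: (INR (sum_id_rem n m) / _) (INR (sum_id_rem m n) / _) (_ / (12 * _ * _)) => u u' q; lra.
Qed.

Lemma expi_0 : expi 0 = 1.
Proof. by rewrite /expi cos_0 sin_0. Qed.

Lemma expi_add (x y : R) : expi (x + y) = Cmult (expi x) (expi y).
Proof. by rewrite /expi /Cmult /= cos_plus sin_plus; f_equal; ring. Qed.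

Lemma epsilon1_mulS (a b c d : Z) : (a * d - b * c = 1)%Z -> (0 < c)%Z -> (0 < d)%Z ->
  epsilon1 b (- a) d (- c) = Cmult (expi (- (3 * PI / 4))) (epsilon1 a b c d).
Proof.
move=> det c_gt0 d_gt0.
have gcd_cd : Z.gcd c d = 1%Z by apply: Z.bezout_1_gcd; exists (- b)%Z, a; lia.
have det_R : IZR a * IZR d - IZR b * IZR c = 1 by rewrite -!mult_IZR -minus_IZR det.
have [c_neq0 d_neq0] : IZR c <> 0 /\ IZR d <> 0 by split; apply: not_0_IZR; lia.
have rec := dedekind_reciprocity _ _ c_gt0 d_gt0 gcd_cd.
rewrite /epsilon1 Cmult_assoc [Cmult (expi _) _]Cmult_comm -Cmult_assoc -expi_add.
do 2 f_equal.
rewrite dedekind_sum_opp // 1?Z.gcd_comm // !opp_IZR.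
have -> : dedekind_sum c d = (IZR c * IZR c + IZR d * IZR d + 1) / (12 * IZR c * IZR d)
  - 1 / 4 - dedekind_sum d c by rewrite -rec; ring.
have -> : IZR b = (IZR a * IZR d - 1) / IZR c by rewrite -det_R; field.
by field; split.
Qed.

Theorem lemma2 (a b c d : Z) :
  (a * d - b * c = 1)%Z -> (0 < c)%Z -> d <> 0%Z ->
  ((0 < d)%Z ->
     epsilon1 b (- a) d (- c) = Cmult (expi (- (3 * PI / 4))) (epsilon1 a b c d)) /\
  ((d < 0)%Z ->
     epsilon1 (- b) a (- d) c = Cmult (expi (3 * PI / 4)) (epsilon1 a b c d)).
Proof.
move=> det c_gt0 _; split=> [d_gt0 | d_lt0]; first exact: epsilon1_mulS.
have det' : (- b * c - a * - d = 1)%Z by lia.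
have opp_d_gt0 : (0 < - d)%Z by lia.
have := epsilon1_mulS _ _ _ _ det' opp_d_gt0 c_gt0; rewrite !Z.opp_involutive => ->.
by rewrite Cmult_assoc -expi_add Rplus_opp_r expi_0 Cmult_1_l.
Qed.
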